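(* For $i=1,\dots,d$ one has $\mathfrak a_{d-1}^i=\mathfrak a_{d-i}$ as ideals of $A_{\infty_1}$. In particular, the set of ideal classes $\{[\mathfrak a_i]:0\le i\le d-1\}$ forms a cyclic subgroup of order $d$ of the ideal class group $\mathsf{Cl}_{A_{\infty_1}}$, generated by $[\mathfrak a_{d-1}]$.
   Context: Let $q$ be a prime power, $k=\mathbb F_q(T)$, $A=\mathbb F_q[T]$, $k_\infty=\mathbb F_q((1/T))$ with $|x|=q^{\deg_T x}$. Let $f\in k_\infty\setminus k$ be a root of $X^2-aX-b$ with $a\in A$ monic, $d:=\deg_T a\ge1$, $b\in\mathbb F_q^*$, with $|f|=q^d$. Let $K=k(f)$, $\infty_1$ the place of $K$ induced by $K\subset k_\infty$, and $A_{\infty_1}$ the Dedekind ring of elements of $K$ regular away from $\infty_1$; one has $A_{\infty_1}=\mathbb F_q[f,fT,\dots,fT^{d-1}]$. For $0\le i\le d-1$, $\mathfrak a_i=(f,fT,\dots,fT^i)\subset A_{\infty_1}$. *)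

From HB Require Import structures.
From mathcomp Require Import all_boot all_order all_algebra all_field.
Set Implicit Arguments. Unset Strict Implicit. Unset Printing Implicit Defensive.
Import GRing.Theory.
Local Open Scope ring_scope.

(* Setting: F = F_q (a finite field), L a field containing (via iota) F,
   T in L transcendental over F (so F(T) inside L is k = F_q(T)),
   f in L with f^2 = a(T) f + b, f not in F(T).  Then K = k(f) inside L. *)

Section Defs.
Variables (F : finFieldType) (L : fieldType) (iota : {rmorphism F -> L}).

Definition ev (T : L) (p : {poly F}) : L := (map_poly iota p).[T].

Definition transcendental_over (T : L) : Prop :=
  forall p : {poly F}, p != 0 -> ev T p != 0.

Definition in_k (T x : L) : Prop :=
  exists u v : {poly F}, ev T v != 0 /\ x * ev T v = ev T u.

Inductive Ainf (T f : L) (d : nat) : L -> Prop :=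
| Ainf_const c : Ainf T f d (iota c)
| Ainf_gen j : (j < d)%N -> Ainf T f d (f * T ^+ j)
| Ainf_add x y : Ainf T f d x -> Ainf T f d y -> Ainf T f d (x + y)
| Ainf_mul x y : Ainf T f d x -> Ainf T f d y -> Ainf T f d (x * y).

End Defs.

Section Ideals.
Variable (L : fieldType).

Inductive ideal_gen (R S : L -> Prop) : L -> Prop :=
| ig_zero : ideal_gen R S 0
| ig_mul r s : R r -> S s -> ideal_gen R S (r * s)
| ig_add x y : ideal_gen R S x -> ideal_gen R S y -> ideal_gen R S (x + y).

Definition ideal_mul (R I J : L -> Prop) : L -> Prop :=
  ideal_gen R (fun x => exists u v, I u /\ J v /\ x = u * v).

Fixpoint ideal_pow (R I : L -> Prop) (n : nat) : L -> Prop :=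
  match n with
  | 0%N => ideal_gen R (fun x => x = 1)
  | n'.+1 => ideal_mul R (ideal_pow R I n') I
  end.

(* I and J define the same ideal class: alpha I = beta J for nonzero
   alpha, beta in R (R has fraction field K, so this is the usual
   equivalence of (fractional) ideals) *)
Definition same_class (R I J : L -> Prop) : Prop :=
  exists alpha beta, R alpha /\ R beta /\ alpha != 0 /\ beta != 0 /\
    (forall x, (exists y, I y /\ x = alpha * y) <-> (exists z, J z /\ x = beta * z)).

End Ideals.

Definition frak_a (F : finFieldType) (L : fieldType) (iota : {rmorphism F -> L})
  (T f : L) (d i : nat) : L -> Prop :=
  ideal_gen (Ainf iota T f d) (fun x => exists j, (j <= i)%N /\ x = f * T ^+ j).

(* Write A for A_{infty_1}.  From f^2 = a f + b one gets
     f T^d = f^2 - b - \sum_{l<d} a_l f T^l,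
   so 1 \in a_d, i.e. a_d = A, and
     b f T^k = fT^k f^2 - \sum_{l<d} a_l fT^k fT^l - fT^{k+1} fT^{d-1};
   with fT^k fT^l = f^2 T^{k+l} this gives a_m a_{d-1} = a_{m-1} for
   0 < m <= d, whence a_{d-1}^i = a_{d-i} by induction.

   Every element of A is c + \sum_{k<d} f p_k(f) T^k with c \in F_q, and the
   elements of a_m (m < d) have p_k(0) = 0 for k > m.  If f p(f) = U + V f with
   U, V \in F_q[T], then deg V = d deg p, so the summands have f-coordinates of
   degrees in distinct classes mod d; hence this representation is unique and
   meets F_q[T] only in 0.  If alpha a_i = beta a_j with i < j, then
   z = beta f / alpha \in a_i and w = alpha f / beta \in a_j satisfy z w = f^2.
   Comparing f-coordinates shows that z or w is constant, or z \in F_q f; in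
   each case some a_m contains c T^n with c != 0, or a_i contains f T^j. *)

From HB Require Import structures.
From mathcomp Require Import all_boot all_order all_algebra all_field.
From mathcomp Require Import ring zify.
Set Implicit Arguments.
Unset Strict Implicit.
Unset Printing Implicit Defensive.
Import GRing.Theory.
Local Open Scope ring_scope.

HB.instance Definition _ (F : finFieldType) (L : fieldType)
    (iota : {rmorphism F -> L}) (x : L) :=
  GRing.RMorphism.copy (ev iota x) (horner_eval x \o map_poly iota).

Section Ev.
Variables (F : finFieldType) (L : fieldType) (iota : {rmorphism F -> L}) (x : L).

Lemma evC c : ev iota x c%:P = iota c.
Proof. by rewrite /ev map_polyC hornerC. Qed.

Lemma evXn n : ev iota x 'X^n = x ^+ n.
Proof. by rewrite /ev map_polyXn hornerXn. Qed.

Lemma evX : ev iota x 'X = x.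
Proof. by rewrite /ev map_polyX hornerX. Qed.

End Ev.

Lemma size_sum_inj (R : nzSemiRingType) n (Q : 'I_n -> {poly R}) :
  {in [pred i | Q i != 0] &, injective (fun i => size (Q i))} ->
  size (\sum_i Q i) = \max_i size (Q i).
Proof.
elim: n Q => [|n IH] Q Qinj; first by rewrite !big_ord0 size_poly0.
pose w := widen_ord (leqnSn n).
have sizeS : size (\sum_(i < n) Q (w i)) = \max_(i < n) size (Q (w i)).
  by apply: IH => i j Qi Qj /(Qinj _ _ Qi Qj) /(congr1 val) eqij; apply: val_inj.
rewrite !big_ord_recr /= -sizeS; set S := \sum_(i < n) _.
have [->|Qn_neq0] := eqVneq (Q ord_max) 0; first by rewrite addr0 size_poly0 maxn0.
have [->|S_neq0] := eqVneq S 0; first by rewrite add0r size_poly0 max0n.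
have n_gt0 : (0 < n)%N.
  rewrite lt0n; apply: contra_neq S_neq0 => n0.
  by rewrite /S big_pred0 // => i; have := leq_trans (ltn_ord i) (eq_leq n0).
have [i Si] : {i | \max_(j < n) size (Q (w j)) = size (Q (w i))}.
  by apply: eq_bigmax; rewrite card_ord.
rewrite -sizeS in Si.
have Qi_neq0 : Q (w i) != 0 by rewrite -size_poly_eq0 -Si size_poly_eq0.
have : size S != size (Q ord_max).
  apply/eqP; rewrite Si => /(Qinj _ _ Qi_neq0 Qn_neq0) /(congr1 val) /= ni.
  by move: (ltn_ord i); rewrite ni ltnn.
case: ltngtP => // [ltSQ|ltQS] _; last by rewrite size_polyDl // (maxn_idPl (ltnW ltQS)).
by rewrite addrC size_polyDl // (maxn_idPr (ltnW ltSQ)).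
Qed.

(** * Ideals generated in a subring *)

Section IdealGen.
Variables (L : fieldType) (R : L -> Prop).
Hypotheses (R0 : R 0) (R1 : R 1) (RN1 : R (-1))
  (RD : forall x y, R x -> R y -> R (x + y))
  (RM : forall x y, R x -> R y -> R (x * y)).

Lemma ideal_gen_mull S r x : R r -> ideal_gen R S x -> ideal_gen R S (r * x).
Proof.
move=> Rr; elim=> [|r' s Rr' Ss|y z _ IHy _ IHz].
- by rewrite mulr0; apply: ig_zero.
- by rewrite mulrA; apply: ig_mul => //; apply: RM.
- by rewrite mulrDr; apply: ig_add.
Qed.

Lemma ideal_gen_opp S x : ideal_gen R S x -> ideal_gen R S (- x).
Proof. by rewrite -mulN1r; apply: ideal_gen_mull. Qed.

Lemma ideal_gen_sum S n (G : 'I_n -> L) :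
  (forall i, ideal_gen R S (G i)) -> ideal_gen R S (\sum_i G i).
Proof. by move=> SG; apply: big_ind => //; [apply: ig_zero | apply: ig_add]. Qed.

Lemma ideal_gen_gen S s : S s -> ideal_gen R S s.
Proof. by move=> Ss; rewrite -[s]mul1r; apply: ig_mul. Qed.

Lemma ideal_gen_subset S S' x :
  (forall s, S s -> ideal_gen R S' s) -> ideal_gen R S x -> ideal_gen R S' x.
Proof.
move=> SS'; elim=> [|r s Rr Ss|x1 x2 _ IH1 _ IH2].
- exact: ig_zero.
- exact/ideal_gen_mull/SS'.
- exact: ig_add.
Qed.

Lemma ideal_gen_sub_ring S x : (forall s, S s -> R s) -> ideal_gen R S x -> R x.
Proof. by move=> SR; elim=> // [r s Rr /SR|y z _ Ry _ Rz]; [apply: RM | apply: RD]. Qed.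

Lemma ideal_gen1 x : ideal_gen R (fun y => y = 1) x <-> R x.
Proof.
split; first by apply: ideal_gen_sub_ring => _ ->.
by move=> Rx; rewrite -[x]mulr1; apply: ig_mul.
Qed.

Lemma ideal_mul_eql I I' J x : (forall y, I y <-> I' y) ->
  ideal_mul R I J x <-> ideal_mul R I' J x.
Proof.
move=> II'; split; apply: ideal_gen_subset => _ [u [v [Iu [Jv ->]]]];
  by apply: ideal_gen_gen; exists u, v; rewrite II' || rewrite -II'.
Qed.

End IdealGen.

(** * The powers of a_{d-1} *)

Section AinfIdeals.
Variables (F : finFieldType) (L : fieldType) (iota : {rmorphism F -> L})
  (T f : L) (a : {poly F}) (b : F) (d : nat).
Hypotheses (d_gt0 : (0 < d)%N) (a_monic : a \is monic) (size_a : size a = d.+1)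
  (b_neq0 : b != 0) (f_sq : f ^+ 2 = ev iota T a * f + iota b).

Local Notation R := (Ainf iota T f d).
Local Notation fa := (frak_a iota T f d).

Lemma Ainf0 : R 0. Proof. by rewrite -(rmorph0 iota); apply: Ainf_const. Qed.
Lemma Ainf1 : R 1. Proof. by rewrite -(rmorph1 iota); apply: Ainf_const. Qed.
Lemma AinfN1 : R (-1). Proof. by rewrite -(rmorphN1 iota); apply: Ainf_const. Qed.

Lemma Ainf_f : R f.
Proof. by have := Ainf_gen iota T f d_gt0; rewrite expr0 mulr1. Qed.

Lemma f_mul_Td :
  f * T ^+ d = f * f - iota b - \sum_(l < d) iota a`_l * (f * T ^+ l).
Proof.
have lead_a : a`_d = 1 by move/monicP: a_monic; rewrite /lead_coef size_a.
have evTa : ev iota T a = \sum_(l < d) iota a`_l * T ^+ l + T ^+ d.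
  rewrite -[a in LHS]coefK poly_def size_a rmorph_sum big_ord_recr /=.
  rewrite lead_a scale1r evXn; congr (_ + _); apply: eq_bigr => l _.
  by rewrite -mul_polyC rmorphM /= evC evXn.
have : f * f = f * ev iota T a + iota b by rewrite -expr2 f_sq mulrC.
rewrite evTa mulrDr mulr_sumr => ->.
by rewrite (eq_bigr (fun l : 'I_d => iota a`_l * (f * T ^+ l))) => [|l _]; ring.
Qed.

Local Notation Ainf_ideal_mull := (ideal_gen_mull (@Ainf_mul _ _ iota T f d)).
Local Notation Ainf_ideal_opp := (ideal_gen_opp AinfN1 (@Ainf_mul _ _ iota T f d)).
Local Notation Ainf_ideal_subset := (ideal_gen_subset (@Ainf_mul _ _ iota T f d)).

Lemma AinfN x : R x -> R (- x).
Proof. by rewrite -mulN1r; apply/Ainf_mul/AinfN1. Qed.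

Lemma Ainf_sum n (G : 'I_n -> L) : (forall i, R (G i)) -> R (\sum_i G i).
Proof. by move=> RG; apply: big_ind => //; [apply: Ainf0 | apply: Ainf_add]. Qed.

Lemma Ainf_fT j : (j <= d)%N -> R (f * T ^+ j).
Proof.
rewrite leq_eqVlt => /predU1P[->|]; last exact: Ainf_gen.
rewrite f_mul_Td; apply/Ainf_add/AinfN/Ainf_sum => [|l].
  by apply/Ainf_add/AinfN/Ainf_const; apply: Ainf_mul Ainf_f Ainf_f.
by apply/Ainf_mul/Ainf_gen; [apply: Ainf_const | apply: ltn_ord].
Qed.

Lemma frak_a_fT m k : (k <= m)%N -> fa m (f * T ^+ k).
Proof. by move=> km; apply: (ideal_gen_gen Ainf1); exists k. Qed.

Lemma frak_a_Ainf m x : (m <= d)%N -> fa m x -> R x.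
Proof.
move=> md; apply: ideal_gen_sub_ring; [exact: Ainf0 | exact: Ainf_add | exact: Ainf_mul |].
by move=> _ [k [km ->]]; apply/Ainf_fT/(leq_trans km).
Qed.

Lemma frak_a_mull m r x : R r -> fa m x -> fa m (r * x).
Proof. exact/ideal_gen_mull/Ainf_mul. Qed.

Lemma frak_a_opp m x : fa m x -> fa m (- x).
Proof. exact/ideal_gen_opp/Ainf_mul/AinfN1. Qed.

Lemma frak_a_f2T m e : (e <= m + d)%N -> fa m (f * f * T ^+ e).
Proof.
move=> em; pose k := minn e m.
have Te : T ^+ e = T ^+ (e - k) * T ^+ k by rewrite -exprD subnK ?geq_minl.
have -> : f * f * T ^+ e = (f * T ^+ (e - k)) * (f * T ^+ k) by rewrite Te; ring.
by apply/frak_a_mull/frak_a_fT; [apply: Ainf_fT; lia | apply: geq_minr].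
Qed.

Lemma frak_a_d x : fa d x <-> R x.
Proof.
split; first exact: frak_a_Ainf.
move=> Rx; rewrite -[x]mulr1; apply: frak_a_mull Rx _.
have -> : 1 = iota b^-1 * iota b by rewrite -rmorphM mulVf // rmorph1.
apply/frak_a_mull; first exact: Ainf_const.
have -> : iota b = f * (f * T ^+ 0) - \sum_(l < d) iota a`_l * (f * T ^+ l) - f * T ^+ d.
  by rewrite f_mul_Td expr0; ring.
apply/ig_add/frak_a_opp/frak_a_fT => //; apply/ig_add/frak_a_opp.
  exact: (frak_a_mull (m := d) Ainf_f (frak_a_fT _)).
apply: ideal_gen_sum => l.
exact: (frak_a_mull (m := d) (Ainf_const _ _ _ _ _) (frak_a_fT (ltnW (ltn_ord l)))).
Qed.

Lemma frak_a_mul_fT m u v : (0 < m)%N -> fa m u -> fa (d - 1) v -> fa m.-1 (u * v).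
Proof.
move=> m_gt0 fau fav; elim: fau => [|r _ Rr [k [km ->]]|u1 u2 _ IH1 _ IH2].
- by rewrite mul0r; apply: ig_zero.
- rewrite -mulrA; apply: frak_a_mull Rr _.
  elim: fav => [|r' _ Rr' [l [ld ->]]|v1 v2 _ IH1 _ IH2].
  + by rewrite mulr0; apply: ig_zero.
  + rewrite mulrCA; apply: frak_a_mull Rr' _.
    rewrite [_ * _](_ : _ = f * f * T ^+ (k + l)); last by rewrite exprD; ring.
    by apply: frak_a_f2T; lia.
  + by rewrite mulrDr; apply: ig_add.
- by rewrite mulrDl; apply: ig_add.
Qed.

Lemma b_mul_fT k : iota b * (f * T ^+ k) = (f * T ^+ k) * (f * (f * T ^+ 0))
  - \sum_(l < d) iota a`_l * ((f * T ^+ k) * (f * T ^+ l))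
  - (f * T ^+ k.+1) * (f * T ^+ (d - 1)).
Proof.
have -> : (f * T ^+ k.+1) * (f * T ^+ (d - 1)) = (f * T ^+ k) * (f * T ^+ d).
  have -> : T ^+ d = T * T ^+ (d - 1) by rewrite -exprS; congr (_ ^+ _); lia.
  by rewrite exprS; ring.
rewrite f_mul_Td mulrBr mulrBr mulr_sumr expr0 mulr1.
by under [in RHS]eq_bigr do rewrite mulrCA; ring.
Qed.

Lemma fT_in_frak_a_mul m k : (k < m <= d)%N ->
  ideal_mul R (fa m) (fa (d - 1)) (f * T ^+ k).
Proof.
move=> /andP[km md].
have prod u v : fa m u -> fa (d - 1) v -> ideal_mul R (fa m) (fa (d - 1)) (u * v).
  by move=> fau fav; apply: (ideal_gen_gen Ainf1); exists u, v.
have -> : f * T ^+ k = iota b^-1 * (iota b * (f * T ^+ k)).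
  by rewrite mulrA -rmorphM mulVf // rmorph1 mul1r.
apply: Ainf_ideal_mull; first exact: Ainf_const.
rewrite b_mul_fT; apply: ig_add; [apply: ig_add | apply: Ainf_ideal_opp].
- by apply: prod; [apply/frak_a_fT/ltnW | apply: frak_a_mull Ainf_f (frak_a_fT _)].
- apply/Ainf_ideal_opp/ideal_gen_sum => l; apply/Ainf_ideal_mull/prod.
  + exact: Ainf_const.
  + exact/frak_a_fT/ltnW.
  + by apply: frak_a_fT; rewrite -ltnS subn1 prednK.
- by apply: prod; apply: frak_a_fT.
Qed.

Lemma frak_a_mul m x : (0 < m <= d)%N ->
  ideal_mul R (fa m) (fa (d - 1)) x <-> fa m.-1 x.
Proof.
move=> /andP[m_gt0 md]; split.
  by apply: Ainf_ideal_subset => _ [u [v [fau [fav ->]]]]; apply: frak_a_mul_fT.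
apply: Ainf_ideal_subset => _ [k [km ->]]; apply: fT_in_frak_a_mul.
by rewrite md andbT; move: km; rewrite -subn1; lia.
Qed.

Lemma frak_a_pow i x : (i <= d)%N ->
  ideal_pow R (fa (d - 1)) i x <-> fa (d - i) x.
Proof.
elim: i x => [|i IH] x id /=.
  rewrite subn0; apply: iff_trans (iff_sym (frak_a_d x)).
  exact: ideal_gen1 Ainf0 Ainf1 (@Ainf_add _ _ iota T f d) (@Ainf_mul _ _ iota T f d) x.
apply: iff_trans (ideal_mul_eql Ainf1 (@Ainf_mul _ _ iota T f d) _ _ (IH^~ (ltnW id))) _.
by rewrite [(d - i.+1)%N]subnS; apply: frak_a_mul; rewrite subn_gt0 id leq_subr.
Qed.

(** * A normal form in A_{infty_1} and the classes of the a_i *)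

Hypotheses (T_tr : transcendental_over iota T) (f_notin_k : ~ in_k iota T f).

Local Notation evT := (ev iota T).
Local Notation evf := (ev iota f).

Lemma coords_inj (U V U' V' : {poly F}) :
  evT U + evT V * f = evT U' + evT V' * f -> U = U' /\ V = V'.
Proof.
move=> eqUV; suff [/eqP + /eqP] : U - U' = 0 /\ V - V' = 0 by rewrite !subr_eq0 => /eqP-> /eqP->.
have : evT (U - U') + evT (V - V') * f = 0.
  by rewrite !rmorphB /=; transitivity (evT U + evT V * f - (evT U' + evT V' * f));
    [ring | rewrite eqUV subrr].
move: (U - U') (V - V') => P Q PQf; have [Q0|Q_neq0] := eqVneq Q 0.
  move: PQf; rewrite Q0 rmorph0 mul0r addr0 => PT0; split=> //.
  by case: (eqVneq P 0) => // /T_tr; rewrite PT0 eqxx.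
case: f_notin_k; exists (- P), Q; split; first exact: T_tr.
by apply/eqP; rewrite rmorphN /= mulrC -addr_eq0 addrC PQf.
Qed.

Lemma coords_mul (U1 V1 U2 V2 : {poly F}) :
  (evT U1 + evT V1 * f) * (evT U2 + evT V2 * f) =
  evT (U1 * U2 + b%:P * (V1 * V2)) + evT (U1 * V2 + U2 * V1 + a * (V1 * V2)) * f.
Proof.
rewrite !(rmorphD, rmorphM) /= evC.
transitivity (evT U1 * evT U2 + (evT U1 * evT V2 + evT U2 * evT V1) * f
  + evT V1 * evT V2 * f ^+ 2); first by ring.
by rewrite f_sq; ring.
Qed.

Lemma coords_mul_eq1 (U1 V1 U2 V2 : {poly F}) : V1 != 0 -> V2 != 0 ->
  (size U1 <= size V1)%N -> (size U2 <= size V2)%N ->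
  U1 * V2 + U2 * V1 + a * (V1 * V2) = a -> V1 * V2 = 1.
Proof.
move=> V1_neq0 V2_neq0 sU1 sU2 eqV; apply/eqP; apply: contraT => VV_neq1.
have : (V1 * V2 - 1) * a = - (U1 * V2 + U2 * V1).
  apply/eqP; rewrite -subr_eq0 opprK; apply/eqP.
  by transitivity (U1 * V2 + U2 * V1 + a * (V1 * V2) - a); [ring | rewrite eqV subrr].
move/(congr1 (fun p : {poly F} => size p)) => /=.
rewrite size_polyN mulrC size_monicM ?subr_eq0 // size_a addSn /=.
have size_UV : (size (U1 * V2 + U2 * V1)%R <= size (V1 * V2)%R)%N.
  rewrite size_mul //; apply: leq_trans (size_polyD _ _) _.
  rewrite geq_max !(leq_trans (size_polyMleq _ _)) // -!subn1 leq_sub2r //.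
    by rewrite addnC; apply: leq_add.
  by apply: leq_add.
have size_VV : (size (V1 * V2)%R <= size (V1 * V2 - 1)%R)%N.
  rewrite -{1}(subrK 1 (V1 * V2)); apply: leq_trans (size_polyD _ _) _.
  by rewrite geq_max leqnn size_poly1 size_poly_gt0 subr_eq0.
move=> eq_size; have := leq_trans size_UV size_VV; rewrite -eq_size.
by rewrite -{2}[size _]add0n leq_add2r leqn0 => /eqP d0; move: d_gt0; rewrite d0.
Qed.

Lemma f_neq0 : f != 0.
Proof.
apply: contra_neq b_neq0 => f0; move: f_sq.
by rewrite f0 expr0n mulr0 add0r => /esym/eqP; rewrite fmorph_eq0 => /eqP.
Qed.

(* For m < d, fT_span m contains a_m (frak_a_fT_span); the point is that the
   representation x = fT_comb p is unique (fT_comb_eq_ev). *)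
Definition fT_comb (p : nat -> {poly F}) : L :=
  \sum_(k < d) f * evf (p k) * T ^+ k.

Definition fT_span (m : nat) (x : L) : Prop :=
  exists2 p, x = fT_comb p & forall k, (m < k < d)%N -> (p k)`_0 = 0.

Lemma fT_comb_delta k q : (k < d)%N ->
  fT_comb (fun l => if l == k then q else 0) = f * evf q * T ^+ k.
Proof.
move=> kd; rewrite /fT_comb (bigD1 (Ordinal kd)) //= eqxx big1 ?addr0 // => l.
by rewrite -val_eqE /= => /negbTE->; rewrite rmorph0 mulr0 mul0r.
Qed.

Lemma fT_span_mono m m' x : (m <= m')%N -> fT_span m x -> fT_span m' x.
Proof. by move=> mm' [p -> p0]; exists p => // k kd; apply: p0; lia. Qed.

Lemma fT_span0 m : fT_span m 0.
Proof.
exists (fun=> 0) => // [|k _]; last by rewrite coef0.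
by rewrite /fT_comb big1 // => k _; rewrite rmorph0 mulr0 mul0r.
Qed.

Lemma fT_spanD m x y : fT_span m x -> fT_span m y -> fT_span m (x + y).
Proof.
move=> [p -> p0] [q -> q0]; exists (fun k => p k + q k) => [|k km].
  by rewrite /fT_comb -big_split; apply: eq_bigr => k _; rewrite rmorphD /=; ring.
by rewrite coefD p0 ?q0 ?addr0.
Qed.

Lemma fT_span_sum m n (G : 'I_n -> L) :
  (forall i, fT_span m (G i)) -> fT_span m (\sum_i G i).
Proof. by move=> SG; apply: big_ind => //; [apply: fT_span0 | apply: fT_spanD]. Qed.

Lemma fT_span_evfM m (r : {poly F}) x : fT_span m x -> fT_span m (evf r * x).
Proof.
move=> [p -> p0]; exists (fun k => r * p k) => [|k km]; last by rewrite coef0M p0 ?mulr0.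
by rewrite /fT_comb mulr_sumr; apply: eq_bigr => k _; rewrite rmorphM /=; ring.
Qed.

Lemma fT_span_evfM0 (r : {poly F}) p : r`_0 = 0 -> fT_span 0 (evf r * fT_comb p).
Proof.
move=> r0; exists (fun k => r * p k) => [|k _]; last by rewrite coef0M r0 mul0r.
by rewrite /fT_comb mulr_sumr; apply: eq_bigr => k _; rewrite rmorphM /=; ring.
Qed.

Lemma fT_spanN m x : fT_span m x -> fT_span m (- x).
Proof. by move=> /(fT_span_evfM (-1)); rewrite rmorphN1 mulN1r. Qed.

Lemma fT_span_fT k : (k < d)%N -> fT_span k (f * T ^+ k).
Proof.
move=> kd; exists (fun l => if l == k then 1 else 0) => [|l /andP[kl _]].
  by rewrite fT_comb_delta // rmorph1 mulr1.
by rewrite gtn_eqF // coef0.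
Qed.

Lemma fT_span_iotaM m c x : fT_span m x -> fT_span m (iota c * x).
Proof. by rewrite -(evC iota f c); apply: fT_span_evfM. Qed.

Lemma fT_span_fM m x : fT_span m x -> fT_span 0 (f * x).
Proof. by move=> [p -> _]; rewrite -(evX iota f); apply: fT_span_evfM0; rewrite coefX. Qed.

Lemma fT_span_f2T e : (e < 2 * d)%N -> fT_span (e - d) (f ^+ 2 * T ^+ e).
Proof.
elim/ltn_ind: e => e IH e2d; have [ed|de] := ltnP e d.
  exists (fun l => if l == e then 'X else 0) => [|l _].
    by rewrite fT_comb_delta // evX expr2.
  by case: eqP; rewrite ?coefX ?coef0.
have [r er rd] : exists2 r : nat, e = (d + r)%N & (r < d)%N by exists (e - d)%N; lia.
rewrite er.
have -> : f ^+ 2 * T ^+ (d + r) = f * (f ^+ 2 * T ^+ r) - iota b * (f * T ^+ r)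
    - \sum_(l < d) iota a`_l * (f ^+ 2 * T ^+ (l + r)).
  rewrite (eq_bigr (fun l : 'I_d => iota a`_l * (f * T ^+ l) * (f * T ^+ r))); last first.
    by move=> l _; rewrite exprD; ring.
  have -> : \sum_(l < d) iota a`_l * (f * T ^+ l) * (f * T ^+ r)
      = (f * f - iota b - f * T ^+ d) * (f * T ^+ r).
    by rewrite -mulr_suml f_mul_Td; ring.
  by rewrite exprD; ring.
rewrite addKn; apply/fT_spanD/fT_spanN/fT_span_sum => [|l].
  apply/fT_spanD/fT_spanN.
    by apply: (fT_span_mono (leq0n r)); apply: fT_span_fM; apply: IH; lia.
  exact/fT_span_iotaM/fT_span_fT.
have ld := ltn_ord l; apply/fT_span_iotaM/(fT_span_mono _ (IH (l + r)%N _ _)); lia.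
Qed.

Lemma fT_span_fT_mul m k y : (k < d)%N -> fT_span m y -> fT_span m (f * T ^+ k * y).
Proof.
move=> kd [q -> q0]; rewrite /fT_comb mulr_sumr; apply: fT_span_sum => l.
have -> : f * T ^+ k * (f * evf (q l) * T ^+ l) = evf (q l) * (f ^+ 2 * T ^+ (k + l)).
  by rewrite exprD; ring.
have [p p_def p0] : fT_span (k + l - d) (f ^+ 2 * T ^+ (k + l)).
  by apply: fT_span_f2T; have := ltn_ord l; lia.
have [lm|ml] := leqP l m.
  by apply/fT_span_evfM/(fT_span_mono _ (ex_intro2 _ _ p p_def p0)); lia.
by rewrite p_def; apply/(fT_span_mono (leq0n m))/fT_span_evfM0/q0; rewrite ml /=.
Qed.

Lemma fT_span_mul m p y : fT_span m y -> fT_span m (fT_comb p * y).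
Proof.
move=> my; rewrite /fT_comb mulr_suml; apply: fT_span_sum => k.
have -> : f * evf (p k) * T ^+ k * y = evf (p k) * (f * T ^+ k * y) by ring.
exact/fT_span_evfM/fT_span_fT_mul.
Qed.

Lemma Ainf_fT_span x : R x -> exists c y, fT_span (d - 1) y /\ x = iota c + y.
Proof.
elim=> [c|j jd|x1 x2 _ [c1 [y1 [s1 ->]]] _ [c2 [y2 [s2 ->]]]
        |x1 x2 _ [c1 [y1 [s1 ->]]] _ [c2 [y2 [s2 ->]]]].
- by exists c, 0; split; [apply: fT_span0 | rewrite addr0].
- exists 0, (f * T ^+ j); rewrite rmorph0 add0r; split => //.
  by apply: (fT_span_mono _ (fT_span_fT jd)); lia.
- by exists (c1 + c2), (y1 + y2); split; [apply: fT_spanD | rewrite rmorphD; ring].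
exists (c1 * c2), (iota c1 * y2 + iota c2 * y1 + y1 * y2); split; last by rewrite rmorphM; ring.
apply/fT_spanD; first by apply/fT_spanD; apply: fT_span_iotaM.
by case: s1 => p -> _; apply: fT_span_mul.
Qed.

Lemma frak_a_fT_span m x : (m < d)%N -> fa m x -> fT_span m x.
Proof.
move=> md; elim=> [|r _ /Ainf_fT_span[c [y [[p -> _] ->]]] [k [km ->]]|x1 x2 _ s1 _ s2].
- exact: fT_span0.
- have fTk : fT_span m (f * T ^+ k) by apply: (fT_span_mono km (fT_span_fT _)); lia.
  by rewrite mulrDl; apply: fT_spanD; [apply: fT_span_iotaM | apply: fT_span_mul].
- exact: fT_spanD.
Qed.

(* The coordinates (A, B) of f * p(f) in the basis (1, f) over F[T], computed
   by Horner's rule on the coefficient list s of p using f^2 = a f + b. *)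
Fixpoint fmul_coords (s : seq F) : {poly F} * {poly F} :=
  if s is c :: s' then
    let: (A, B) := fmul_coords s' in (b%:P * B, A + a * B + c%:P)
  else (0, 0).

Lemma fmul_coords_spec s : let: (A, B) := fmul_coords s in
  [/\ f * evf (Poly s) = evT A + evT B * f, (size A <= size B)%N &
      size B = if Poly s == 0 then 0%N else (d * (size (Poly s)).-1).+1].
Proof.
elim: s => [|c s] /=; first by rewrite !rmorph0 mulr0 mul0r addr0 eqxx size_poly0.
case: (fmul_coords s) => A B [fAB sizeAB sizeB]; set q := Poly s in fAB sizeB *.
rewrite cons_poly_def.
have fAB' : f * evf (q * 'X + c%:P) = evT (b%:P * B) + evT (a * B + (A + c%:P)) * f.
  rewrite !rmorphD !rmorphM /= !evC evX.
  transitivity ((f * evf q) * f + iota c * f); first by ring.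
  rewrite fAB; transitivity (evT A * f + evT B * f ^+ 2 + iota c * f); first by ring.
  by rewrite f_sq; ring.
have [q0|q_neq0] := eqVneq q 0.
  have B0 : B = 0 by apply/eqP; rewrite -size_poly_eq0 sizeB q0 eqxx.
  have A0 : A = 0 by move: sizeAB; rewrite B0 size_poly0 leqn0 size_poly_eq0 => /eqP.
  move: fAB'; rewrite q0 A0 B0 !(mulr0, mul0r, add0r) size_poly0 size_polyC polyC_eq0 => ->.
  by split=> //; case: eqP; rewrite ?muln0.
have B_gt0 : (0 < size B)%N by rewrite sizeB (negbTE q_neq0).
have size_aB : size (a * B) = (d + size B)%N.
  by rewrite size_monicM // ?size_a // -size_poly_gt0.
have size_Ac : (size (A + c%:P)%R < size (a * B)%R)%N.
  rewrite size_aB; apply: leq_ltn_trans (size_polyD _ _) _.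
  rewrite gtn_max (leq_ltn_trans sizeAB) ?(leq_ltn_trans (size_polyC_leq1 c)) //.
    exact: leq_add d_gt0 B_gt0.
  by rewrite -[X in (X < _)%N]add0n ltn_add2r.
have -> : A + a * B + c%:P = a * B + (A + c%:P) by ring.
split=> //; rewrite size_polyDl // size_aB; first by rewrite size_Cmul // leq_addl.
rewrite -size_poly_eq0 size_MXaddC (negbTE q_neq0) /= sizeB (negbTE q_neq0).
by have := size_poly_gt0 q; rewrite q_neq0; case: (size q) => // n _; rewrite mulnS addnS addnC.
Qed.

Lemma fmul_coordsP (p : {poly F}) :
  [/\ f * evf p = evT (fmul_coords p).1 + evT (fmul_coords p).2 * f,
      (size (fmul_coords p).1 <= size (fmul_coords p).2)%N &
      size (fmul_coords p).2 = if p == 0 then 0%N else (d * (size p).-1).+1].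
Proof. by have := fmul_coords_spec p; rewrite polyseqK; case: (fmul_coords p). Qed.

Lemma fmul_coords2_eq0 (p : {poly F}) : ((fmul_coords p).2 == 0) = (p == 0).
Proof. by have [_ _ sB] := fmul_coordsP p; rewrite -size_poly_eq0 sB; case: (eqVneq p 0). Qed.

Definition fT_coords (p : nat -> {poly F}) : {poly F} * {poly F} :=
  (\sum_(k < d) (fmul_coords (p k)).1 * 'X^k,
   \sum_(k < d) (fmul_coords (p k)).2 * 'X^k).

Lemma fT_comb_coords p :
  fT_comb p = evT (fT_coords p).1 + evT (fT_coords p).2 * f.
Proof.
rewrite /fT_comb !rmorph_sum mulr_suml -big_split; apply: eq_bigr => k _ /=.
have [-> _ _] := fmul_coordsP (p k).
by rewrite !rmorphM /= !evXn; ring.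
Qed.

Lemma size_fT_coords2 p :
  size (fT_coords p).2 = \max_(k < d) size ((fmul_coords (p k)).2 * 'X^k)%R.
Proof.
(* The k-th summand has degree d * deg (p k) + k: no cancellation can occur. *)
have size_mod k : (fmul_coords (p k)).2 * 'X^k != 0 ->
    ((size ((fmul_coords (p k)).2 * 'X^k)%R).-1 %% d = k %% d)%N.
  rewrite mulf_eq0 negb_or => /andP[B_neq0 _]; rewrite size_mulXn //.
  have [_ _ ->] := fmul_coordsP (p k); rewrite -fmul_coords2_eq0 (negbTE B_neq0).
  by rewrite addnS /= addnC mulnC modnMDl.
apply: size_sum_inj => i j; rewrite !inE => /size_mod Bi /size_mod Bj eqij.
by apply: val_inj; rewrite /= -(modn_small (ltn_ord i)) -(modn_small (ltn_ord j)) -Bi -Bj eqij.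
Qed.

Lemma size_fT_coords1 p : (size (fT_coords p).1 <= size (fT_coords p).2)%N.
Proof.
rewrite size_fT_coords2; apply: leq_trans (size_sum _ _ _) _.
apply/bigmax_leqP => k _; apply: leq_trans (leq_bigmax k).
have [_ sizeAB _] := fmul_coordsP (p k).
have [->|A_neq0] := eqVneq (fmul_coords (p k)).1 0; first by rewrite mul0r size_poly0.
rewrite !size_mulXn ?leq_add2l // -size_poly_gt0 (leq_trans _ sizeAB) //.
by rewrite size_poly_gt0.
Qed.

Lemma fT_comb_eq_ev p W : fT_comb p = evT W ->
  (forall k, (k < d)%N -> p k = 0) /\ W = 0.
Proof.
rewrite fT_comb_coords => eqW.
have [UW V0] : (fT_coords p).1 = W /\ (fT_coords p).2 = 0.
  by apply: coords_inj; rewrite eqW rmorph0 mul0r addr0.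
split=> [k kd|].
  have := size_fT_coords2 p; rewrite V0 size_poly0 => /esym/eqP; rewrite -leqn0.
  move=> /bigmax_leqP/(_ (Ordinal kd) isT); rewrite leqn0 size_poly_eq0 mulf_eq0.
  by rewrite fmul_coords2_eq0 (negbTE (monic_neq0 (monicXn _ k))) orbF => /eqP.
have := size_fT_coords1 p; rewrite V0 size_poly0 leqn0 size_poly_eq0 => /eqP.
by rewrite UW.
Qed.

Lemma Ainf_coords x : R x ->
  exists U V, x = evT U + evT V * f /\ (size U <= maxn 1 (size V))%N.
Proof.
move=> /Ainf_fT_span[c [_ [[p -> _] ->]]].
exists (c%:P + (fT_coords p).1), (fT_coords p).2; split.
  by rewrite fT_comb_coords rmorphD /= evC addrA.
apply: leq_trans (size_polyD _ _) _; rewrite geq_max.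
by rewrite (leq_trans (size_polyC_leq1 c)) ?leq_maxl // (leq_trans (size_fT_coords1 p)) ?leq_maxr.
Qed.

Lemma Ainf_f2_factor z w : R z -> R w -> z * w = f ^+ 2 ->
  [\/ exists c, z = iota c, exists c, w = iota c | exists c, z = iota c * f].
Proof.
move=> /Ainf_coords[Uz [Vz [-> sUz]]] /Ainf_coords[Uw [Vw [-> sUw]]] zw.
have const (U : {poly F}) : (size U <= 1)%N -> evT U = iota U`_0.
  by move=> sU; rewrite {1}[U]size1_polyC // evC.
have [Vz0|Vz_neq0] := eqVneq Vz 0.
  constructor 1; exists Uz`_0; rewrite Vz0 rmorph0 mul0r addr0 const //.
  by move: sUz; rewrite Vz0 size_poly0 maxn0.
have [Vw0|Vw_neq0] := eqVneq Vw 0.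
  constructor 2; exists Uw`_0; rewrite Vw0 rmorph0 mul0r addr0 const //.
  by move: sUw; rewrite Vw0 size_poly0 maxn0.
constructor 3.
have [eqU eqV] : Uz * Uw + b%:P * (Vz * Vw) = b%:P /\
    Uz * Vw + Uw * Vz + a * (Vz * Vw) = a.
  by apply: coords_inj; rewrite -coords_mul zw f_sq evC addrC.
have sVz : (size Uz <= size Vz)%N by rewrite (maxn_idPr _) // size_poly_gt0 in sUz.
have sVw : (size Uw <= size Vw)%N by rewrite (maxn_idPr _) // size_poly_gt0 in sUw.
have VV1 := coords_mul_eq1 Vz_neq0 Vw_neq0 sVz sVw eqV.
have UzUw : Uz * Uw = 0 by move: eqU; rewrite VV1 mulr1 -{2}[b%:P]add0r => /addIr.
have UzVw : Uz * Vw + Uw * Vz = 0 by move: eqV; rewrite VV1 mulr1 -{2}[a]add0r => /addIr.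
have Uz0 : Uz = 0.
  move/eqP: UzUw; rewrite mulf_eq0 => /orP[/eqP //|/eqP Uw0].
  by move/eqP: UzVw; rewrite Uw0 mul0r addr0 mulf_eq0 (negbTE Vw_neq0) orbF => /eqP.
have : Vz \is a GRing.unit by apply/unitrP; exists Vw; rewrite mulrC VV1.
rewrite poly_unitE => /andP[/eqP sVz1 _].
by exists Vz`_0; rewrite Uz0 rmorph0 add0r const ?sVz1.
Qed.

Lemma frak_a_poly_eq0 m W : (m < d)%N -> fa m (evT W) -> W = 0.
Proof. by move=> md /(frak_a_fT_span md)[p /esym /fT_comb_eq_ev[_ ->]]. Qed.

Lemma frak_a_fT_eq0 i j e : (i < j < d)%N -> fa i (iota e * (f * T ^+ j)) -> e = 0.
Proof.
move=> /andP[ij jd] /(frak_a_fT_span (ltn_trans ij jd))[p p_def p0].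
pose q k := p k - (if k == j then e%:P else 0).
have : fT_comb q = evT 0.
  have -> : fT_comb q = fT_comb p - fT_comb (fun k => if k == j then e%:P else 0).
    by rewrite /fT_comb -sumrB; apply: eq_bigr => k _; rewrite rmorphB /=; ring.
  by rewrite fT_comb_delta // evC -p_def rmorph0; ring.
move=> /fT_comb_eq_ev[/(_ j jd) /eqP]; rewrite /q eqxx subr_eq0 => /eqP pj _.
by have := p0 j; rewrite ij jd pj coefC eqxx => ->.
Qed.

Lemma frak_a_scaled_const_false m n alpha beta c : (m < d)%N -> (n < d)%N ->
  alpha != 0 -> beta != 0 -> beta * f = alpha * iota c ->
  (forall x, fa n x -> exists y, fa m y /\ beta * x = alpha * y) -> False.
Proof.
move=> md nd alpha_neq0 beta_neq0 beta_f scaled.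
have [y [fay y_def]] := scaled _ (frak_a_fT (leqnn n)).
have : y = evT (c%:P * 'X^n).
  by apply: (mulfI alpha_neq0); rewrite -y_def rmorphM /= evC evXn mulrA beta_f mulrA.
move=> y_ev; rewrite y_ev in fay; move/(frak_a_poly_eq0 md)/eqP: fay.
rewrite mulf_eq0 polyC_eq0 (negbTE (monic_neq0 (monicXn _ n))) orbF => /eqP c0.
move/eqP: beta_f; rewrite c0 rmorph0 mulr0 mulf_eq0 (negbTE beta_neq0).
exact: negP f_neq0.
Qed.

Lemma frak_a_scaled_f_false i j alpha beta c : (i < j < d)%N ->
  alpha != 0 -> beta != 0 -> beta * f = alpha * (iota c * f) ->
  (forall x, fa j x -> exists y, fa i y /\ beta * x = alpha * y) -> False.
Proof.
move=> ijd alpha_neq0 beta_neq0 beta_f scaled.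
have [y [fay y_def]] := scaled _ (frak_a_fT (leqnn j)).
have : y = iota c * (f * T ^+ j).
  by apply: (mulfI alpha_neq0); rewrite -y_def mulrA beta_f; ring.
move=> y_fT; rewrite y_fT in fay; move/(frak_a_fT_eq0 ijd): fay => c0.
move/eqP: beta_f; rewrite c0 rmorph0 mul0r mulr0 mulf_eq0 (negbTE beta_neq0).
exact: negP f_neq0.
Qed.

Lemma frak_a_class_neq i j : (i < j <= d - 1)%N -> ~ same_class R (fa i) (fa j).
Proof.
move=> /andP[ij jd1] [alpha [beta [_ [_ [alpha_neq0 [beta_neq0 scaled]]]]]].
have jd : (j < d)%N by lia.
have id : (i < d)%N by lia.
have fa_f k : fa k f by have := frak_a_fT (leq0n k); rewrite expr0 mulr1.
have [z [faz z_def]] := (scaled (beta * f)).2 (ex_intro _ f (conj (fa_f j) erefl)).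
have [w [faw w_def]] := (scaled (alpha * f)).1 (ex_intro _ f (conj (fa_f i) erefl)).
have zw : z * w = f ^+ 2.
  apply: (mulfI (mulf_neq0 beta_neq0 alpha_neq0)).
  by transitivity ((alpha * z) * (beta * w)); [ring | rewrite -z_def -w_def; ring].
have Rz := frak_a_Ainf (ltnW id) faz; have Rw := frak_a_Ainf (ltnW jd) faw.
case: (Ainf_f2_factor Rz Rw zw) => [[c z_c]|[c w_c]|[c z_cf]].
- apply: (frak_a_scaled_const_false id jd alpha_neq0 beta_neq0 (c := c)).
    by rewrite z_def z_c.
  by move=> x faj; apply/(scaled (beta * x)); exists x.
- apply: (frak_a_scaled_const_false jd id beta_neq0 alpha_neq0 (c := c)).
    by rewrite w_def w_c.
  by move=> x fai; apply/(scaled (alpha * x)); exists x.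
- have ijd : (i < j < d)%N by rewrite ij jd.
  apply: (frak_a_scaled_f_false ijd alpha_neq0 beta_neq0 (c := c)); first by rewrite z_def z_cf.
  by move=> x faj; apply/(scaled (beta * x)); exists x.
Qed.

End AinfIdeals.

Theorem lemma3 (F : finFieldType) (L : fieldType) (iota : {rmorphism F -> L})
  (T f : L) (a : {poly F}) (b : F) (d : nat) :
  (0 < d)%N -> a \is monic -> size a = d.+1 -> b != 0 ->
  transcendental_over iota T ->
  f ^+ 2 = ev iota T a * f + iota b ->
  ~ in_k iota T f ->
  (forall i : nat, (1 <= i <= d)%N ->
     forall x : L, ideal_pow (Ainf iota T f d) (frak_a iota T f d (d - 1)) i x
                   <-> frak_a iota T f d (d - i) x)
  /\ (forall i j : nat, (i < j <= d - 1)%N ->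
        ~ same_class (Ainf iota T f d) (frak_a iota T f d i) (frak_a iota T f d j)).
Proof.
move=> d_gt0 a_monic size_a b_neq0 T_tr f_sq f_notin_k; split.
  by move=> i /andP[_ id] x; apply: (frak_a_pow d_gt0 a_monic size_a b_neq0 f_sq).
exact: (frak_a_class_neq d_gt0 a_monic size_a b_neq0 f_sq T_tr f_notin_k).
Qed.
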